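(* Let $A$ be an $\mathbb{F}_p$-algebra, $\delta=(\delta_1,\ldots,\delta_n)$ an $n$-tuple of pairwise commuting derivations of $A$, $d_\nu\in\mathbb{N}\cup\{\infty\}$, and let $\{x_\nu^{[p^{k}]}\mid \nu=1,\ldots,n;\ k\in\mathbb{N},\ k<d_\nu\}$ be pairwise commuting elements of $A$. Put $x_\nu^{[0]}=1$, and for $0\le i<p^{d_\nu}$ written $i=\sum_ki_kp^k$ ($0\le i_k<p$) put $x_\nu^{[i]}=\prod_k\frac{(x_\nu^{[p^k]})^{i_k}}{i_k!}$; for $\alpha\in I=\{\alpha\in\mathbb{N}^n\mid\alpha_\nu<p^{d_\nu}\}$ put $x^{[\alpha]}=\prod_{\nu=1}^nx_\nu^{[\alpha_\nu]}$. Then $\{x^{[\alpha]}\mid\alpha\in I\}$ is an iterative $\delta$-descent if and only if $\delta_\nu(x_\mu^{[p^{k}]})=\delta_{\nu,\mu}x_\mu^{[p^{k}-1]}$ and $(x_\mu^{[p^{k}]})^p=0$ for all $\nu,\mu=1,\ldots,n$ and $k\in\mathbb{N}$ with $k<d_\mu$ ($\delta_{\nu,\mu}$ the Kronecker delta).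
   Context: A family $\{y^{[\alpha]}\mid\alpha\in I\}$ is an iterative $\delta$-descent if $y^{[0]}=1$, $y^{[\alpha]}y^{[\beta]}=\binom{\alpha+\beta}{\beta}y^{[\alpha+\beta]}$ for all $\alpha,\beta\in I$ ($\binom{\alpha+\beta}{\beta}=\prod_i\binom{\alpha_i+\beta_i}{\beta_i}$ in $\mathbb{F}_p$; right side $0$ when $\alpha+\beta\notin I$), and $\delta_1^{\alpha_1}\cdots\delta_n^{\alpha_n}(y^{[\beta]})=y^{[\beta-\alpha]}$ for all $\alpha\in\mathbb{N}^n$, $\beta\in I$, with $y^{[\gamma]}=0$ for $\gamma\notin\mathbb{N}^n$. *)

From HB Require Import structures.
From mathcomp Require Import all_boot all_order all_algebra.
Set Implicit Arguments. Unset Strict Implicit. Unset Printing Implicit Defensive.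
Import GRing.Theory.
Local Open Scope ring_scope.

(* d : option nat encodes d_nu in N u {oo}; None = oo. *)
Definition ltd (k : nat) (d : option nat) : bool :=
  if d is Some m then (k < m)%N else true.

Definition ltpow (p : nat) (d : option nat) (i : nat) : bool :=
  if d is Some m then (i < p ^ m)%N else true.

Definition inI (n p : nat) (d : 'I_n -> option nat) (a : 'I_n -> nat) : bool :=
  [forall nu, ltpow p (d nu) (a nu)].

Definition invfact (A : nzRingType) (p c : nat) : A :=
  (nat_of_ord (((c`!)%:R : 'F_p)^-1))%:R.

Definition digit (p i k : nat) : nat := ((i %/ p ^ k) %% p)%N.

(* x_nu^[i] = prod_k (x_nu^[p^k])^{i_k} / i_k!, where x nu k stands for x_nu^[p^k] *)
Definition xdiv (A : nzRingType) (n p : nat) (x : 'I_n -> nat -> A) (nu : 'I_n) (i : nat) : A :=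
  \prod_(k < i.+1) ((x nu k) ^+ (digit p i k) * invfact A p (digit p i k)).

Definition xmulti (A : nzRingType) (n p : nat) (x : 'I_n -> nat -> A) (a : 'I_n -> nat) : A :=
  \prod_(nu < n) xdiv p x nu (a nu).

Definition is_derivation (A : nzRingType) (D : A -> A) : Prop :=
  (forall a b, D (a + b) = D a + D b) /\ (forall a b, D (a * b) = D a * b + a * D b).

Definition dpow (A : nzRingType) (n : nat) (delta : 'I_n -> A -> A) (a : 'I_n -> nat) : A -> A :=
  foldr (fun i f => iter (a i) (delta i) \o f) id (enum 'I_n).

Definition iterative_descent (A : nzRingType) (n : nat) (delta : 'I_n -> A -> A)
    (I : ('I_n -> nat) -> bool) (y : ('I_n -> nat) -> A) : Prop :=
  y (fun _ => 0%N) = 1 /\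
  (forall a b, I a -> I b ->
     y a * y b = (\prod_(i < n) 'C(a i + b i, b i))%:R *
                 (if I (fun i => a i + b i)%N then y (fun i => a i + b i)%N else 0)) /\
  (forall a b, I b ->
     dpow delta a (y b) = if [forall i, (a i <= b i)%N] then y (fun i => b i - a i)%N else 0).

From HB Require Import structures.
From mathcomp Require Import all_boot all_order all_algebra.
From mathcomp Require Import zify ring.
Set Implicit Arguments. Unset Strict Implicit. Unset Printing Implicit Defensive.
Import GRing.Theory.
Local Open Scope ring_scope.

(* Write x_nu^[i] through the base-p digits of i as a product of the one-digit factors
   (x_nu^[p^k])^c / c!.  By Lucas' theorem, binomial coefficients mod p also factor over
   digits, so the multiplication rule of a descent reduces to the one-digit rule
   a^c/c! * a^e/e! = C(c+e,e) a^(c+e)/(c+e)!, which holds for c, e < p exactly when a^p = 0;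
   and by the Leibniz rule delta_nu lowers the index by one as soon as it does so on the
   generators x_nu^[p^k].  Conversely, the descent axioms at the index p^k e_mu give
   delta_nu x_mu^[p^k] = [nu = mu] x_mu^[p^k - 1] and (x_mu^[p^k])^j = j! x_mu^[j p^k],
   which vanishes for j = p. *)

Lemma coef_1X_exp (R : comNzRingType) m j : ((1 + 'X) ^+ m : {poly R})`_j = 'C(m, j)%:R.
Proof.
rewrite addrC exprD1n coef_sum.
rewrite (eq_bigr (fun i : 'I_m.+1 => if i == j :> nat then 'C(m, j)%:R else 0)) => [|i _].
  by rewrite -big_mkcond (big_ord1_eq _ (fun _ => _)); case: ltnP => // /bin_small ->.
by rewrite coefMn coefXn eq_sym; case: eqP => [->|]; rewrite ?mul0rn.
Qed.

Lemma lucas_binomial p N r s c e : prime p -> (r < p ^ N)%N -> (s < p ^ N)%N ->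
  'C(r + p ^ N * c, s + p ^ N * e) = 'C(r, s) * 'C(c, e) %[mod p].
Proof.
move=> p_pr r_lt s_lt; rewrite -!(val_Fp_nat p_pr); congr nat_of_ord.
set q := (p ^ N)%N in r_lt s_lt *; have q_gt0 : (0 < q)%N by rewrite expn_gt0 prime_gt0.
have q_pchar : [pchar {poly 'F_p}].-nat q.
  by rewrite pnatX pnatE // pchar_poly (pchar_Fp p_pr).
rewrite -(coef_1X_exp _ (r + q * c)) exprD exprM (exprDn_pchar 1 'X q_pchar) expr1n.
rewrite [1 + 'X ^+ q]addrC exprD1n mulr_sumr coef_sum.
rewrite (eq_bigr (fun a : 'I_c.+1 => if a == e :> nat then ('C(r, s) * 'C(c, e))%:R else 0)).
  rewrite -big_mkcond (big_ord1_eq _ (fun _ => _)); case: ltnP => // /bin_small ->.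
  by rewrite muln0.
move=> a _; rewrite -exprM mulrnAr coefMn coefMXn coef_1X_exp.
case: (ltngtP a e) => [a_lt|e_lt|->].
- rewrite ifN; last by nia.
  by rewrite bin_small ?mul0rn //; nia.
- by rewrite ifT ?mul0rn //; nia.
- by rewrite ltnNge leq_addl /= addnK natrM mulr_natr.
Qed.

Lemma fact_Fp_neq0 p c : prime p -> (c < p)%N -> (c`!%:R : 'F_p) != 0.
Proof.
move=> p_pr; rewrite -(dvdn_pcharf (pchar_Fp p_pr)).
elim: c => [|c IHc] c_lt; first by rewrite dvdn1 neq_ltn (prime_gt1 p_pr) orbT.
rewrite factS Euclid_dvdM // negb_or IHc ?(ltnW c_lt) // andbT.
by apply/negP => /(dvdn_leq (ltn0Sn c)); rewrite leqNgt c_lt.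
Qed.

Lemma invfact_Fp_mul p c e : prime p -> (c + e < p)%N ->
  (c`!%:R : 'F_p)^-1 * (e`!%:R)^-1 = 'C(c + e, e)%:R * ((c + e)`!%:R)^-1.
Proof.
move=> p_pr ce_lt; have := bin_fact (leq_addl c e); rewrite addnK => <-.
have c_neq0 := fact_Fp_neq0 p_pr (leq_ltn_trans (leq_addr e c) ce_lt).
have e_neq0 := fact_Fp_neq0 p_pr (leq_ltn_trans (leq_addl c e) ce_lt).
have C_neq0 : ('C(c + e, e)%:R : 'F_p) != 0.
  apply: contraNneq (fact_Fp_neq0 p_pr ce_lt).
  by rewrite -(bin_fact (leq_addl c e)) addnK natrM => ->; rewrite mul0r.
by rewrite !natrM; field; apply/and3P.
Qed.

Section CharacteristicP.

Variables (A : nzRingType) (p : nat).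
Hypothesis charA : p \in [pchar A].
Let p_pr : prime p := pcharf_prime charA.

Lemma natr_Fp_nat m : (nat_of_ord (m%:R : 'F_p))%:R = m%:R :> A.
Proof. by rewrite (val_Fp_nat p_pr) (GRing.natr_mod_pchar charA). Qed.

Lemma natr_Fp_mul (u v : 'F_p) :
  (nat_of_ord (u * v))%:R = (nat_of_ord u)%:R * (nat_of_ord v)%:R :> A.
Proof. by rewrite -natrM -[RHS]natr_Fp_nat natrM !natr_Zp. Qed.

Lemma lucas_binomial_pchar N r s c e : (r < p ^ N)%N -> (s < p ^ N)%N ->
  'C(r + p ^ N * c, s + p ^ N * e)%:R = ('C(r, s) * 'C(c, e))%:R :> A.
Proof.
move=> r_lt s_lt; rewrite -(GRing.natr_mod_pchar charA) (lucas_binomial c e p_pr r_lt s_lt).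
by rewrite (GRing.natr_mod_pchar charA).
Qed.

Lemma invfact0 : invfact A p 0 = 1.
Proof. by rewrite /invfact fact0 invr1 (natr_Fp_nat 1). Qed.

Lemma invfact_mul c e : (c + e < p)%N ->
  invfact A p c * invfact A p e = 'C(c + e, e)%:R * invfact A p (c + e).
Proof.
move=> ce_lt; rewrite /invfact -natr_Fp_mul -(natr_Fp_nat 'C(c + e, e)) -natr_Fp_mul.
by rewrite invfact_Fp_mul.
Qed.

End CharacteristicP.

Lemma prodr_eq0_mem (R : nzRingType) (I : eqType) (r : seq I) (F : I -> R) i :
  i \in r -> F i = 0 -> \prod_(j <- r) F j = 0.
Proof.
move=> + Fi0; elim: r => [|j r IHr] //; rewrite in_cons big_cons => /predU1P[<-|/IHr->].
  by rewrite Fi0 mul0r.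
by rewrite mulr0.
Qed.

Lemma prodr_if0 (R : nzRingType) (I : finType) (P : pred I) (F : I -> R) :
  \prod_i (if P i then F i else 0) = if [forall i, P i] then \prod_i F i else 0.
Proof.
case: (boolP [forall i, P i]) => [/forallP allP|/forallPn[i /negbTE Pi]].
  by apply: eq_bigr => i _; rewrite allP.
by apply: (prodr_eq0_mem (i := i)); rewrite ?mem_index_enum ?Pi.
Qed.

Section Derivations.

Variables (A : nzRingType) (D : A -> A).
Hypothesis derD : is_derivation D.

Lemma derivation0 : D 0 = 0.
Proof. by apply: (addrI (D 0)); rewrite -derD.1 !addr0. Qed.

Lemma derivation1 : D 1 = 0.
Proof.
have := derD.2 1 1; rewrite !mul1r mulr1 => D1.
by apply: (addrI (D 1)); rewrite addr0 -D1.
Qed.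

Lemma derivation_nat m : D m%:R = 0.
Proof.
elim: m => [|m IHm]; first exact: derivation0.
by rewrite -addn1 natrD derD.1 IHm derivation1 addr0.
Qed.

Lemma derivationX a c : GRing.comm a (D a) ->
  D (a ^+ c.+1) = c.+1%:R * (a ^+ c * D a).
Proof.
move=> aDa; elim: c => [|c IHc]; first by rewrite expr1 expr0 !mul1r.
rewrite exprSr derD.2 IHc -!mulrA -aDa [a ^+ c * _]mulrA -exprSr.
by rewrite -[in RHS](addn1 c.+1) natrD mulrDl mul1r.
Qed.

Lemma derivation_iter0 m : iter m D 0 = 0.
Proof. by elim: m => //= m ->; rewrite derivation0. Qed.

Lemma derivation_prod0 (I : eqType) (r : seq I) (F : I -> A) :
  (forall i, i \in r -> D (F i) = 0) -> D (\prod_(i <- r) F i) = 0.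
Proof.
elim: r => [|i r IHr] DF0; first by rewrite big_nil derivation1.
rewrite big_cons derD.2 IHr ?DF0 ?mem_head ?mul0r ?mulr0 ?addr0 // => j jr.
by rewrite DF0 // in_cons jr orbT.
Qed.

Lemma derivation_prod1 (I : eqType) (r : seq I) (F : I -> A) j :
  uniq r -> j \in r -> (forall i, i != j -> D (F i) = 0) ->
  D (\prod_(i <- r) F i) = \prod_(i <- r) (if i == j then D (F i) else F i).
Proof.
elim: r => [|i r IHr] //= /andP[ir r_uniq]; rewrite in_cons big_cons big_cons derD.2.
have [<- _ DF0|ij /= jr DF0] := eqVneq i j; last by rewrite DF0 // mul0r add0r IHr.
rewrite derivation_prod0 => [|k kr]; last by apply: DF0; apply: contraNneq ir => <-.
rewrite mulr0 addr0; congr (_ * _); apply: eq_big_seq => k kr.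
by rewrite ifN //; apply: contraNneq ir => <-.
Qed.

End Derivations.

Lemma digit0 p k : digit p 0 k = 0%N.
Proof. by rewrite /digit div0n mod0n. Qed.

Lemma digitD_low p N r c k : (0 < p)%N -> (k < N)%N ->
  digit p (r + p ^ N * c) k = digit p r k.
Proof.
move=> p_gt0 kN; rewrite /digit.
have -> : (p ^ N = p ^ k * (p * p ^ (N - k.+1)))%N by rewrite -expnS -expnD; congr expn; lia.
by rewrite addnC -mulnA mulnC divnMDl ?expn_gt0 ?p_gt0 // -mulnA mulnC modnMDl.
Qed.

Lemma digitD_top p N r c : (r < p ^ N)%N -> (c < p)%N -> digit p (r + p ^ N * c) N = c.
Proof.
move=> r_lt c_lt; rewrite /digit addnC mulnC divnMDl; last by case: (p ^ N)%N r_lt.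
by rewrite divn_small // addn0 modn_small.
Qed.

Lemma split_top_digit p N i : (0 < p)%N -> (i < p ^ N.+1)%N ->
  exists r c, [/\ (r < p ^ N)%N, (c < p)%N & i = r + p ^ N * c]%N.
Proof.
move=> p_gt0 i_lt; exists (i %% p ^ N)%N, (i %/ p ^ N)%N; split.
- by rewrite ltn_pmod // expn_gt0 p_gt0.
- by rewrite ltn_divLR ?expn_gt0 ?p_gt0 // -expnS.
- by rewrite addnC mulnC -divn_eq.
Qed.

Definition divexp (A : nzRingType) (p : nat) (a : A) (c : nat) : A := a ^+ c * invfact A p c.

Definition divpow (A : nzRingType) (p : nat) (f : nat -> A) (N i : nat) : A :=
  \prod_(k < N) divexp p (f k) (digit p i k).

Section DividedPowers.

Variables (A : nzRingType) (p : nat).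
Hypothesis charA : p \in [pchar A].
Let p_gt0 : (0 < p)%N := prime_gt0 (pcharf_prime charA).

Lemma divexp0 (a : A) : divexp p a 0 = 1.
Proof. by rewrite /divexp expr0 mul1r invfact0. Qed.

Lemma divexp1 (a : A) : divexp p a 1 = a.
Proof. by rewrite /divexp expr1 -[invfact A p 1]/(invfact A p 0) invfact0 // mulr1. Qed.

Lemma commr_divexp (a b : A) c : GRing.comm b a -> GRing.comm b (divexp p a c).
Proof. by move=> ba; apply: commrM; [apply: commrX | apply: commr_nat]. Qed.

Lemma divexpM (a : A) c e : a ^+ p = 0 ->
  divexp p a c * divexp p a e = if (c + e < p)%N then 'C(c + e, e)%:R * divexp p a (c + e) else 0.
Proof.
move=> ap0; rewrite /divexp mulrA -[_ * a ^+ e]mulrA -(commr_nat (a ^+ e)).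
rewrite !mulrA -exprD -mulrA; case: ltnP => [ce_lt|ce_ge].
  by rewrite invfact_mul // mulrA (commr_nat _ _).
by rewrite -(subnK ce_ge) exprD ap0 mulr0 mul0r.
Qed.

Lemma divexp_der (D : A -> A) (a : A) c : is_derivation D -> GRing.comm a (D a) -> (c < p)%N ->
  D (divexp p a c) = if (0 < c)%N then divexp p a c.-1 * D a else 0.
Proof.
move=> derD aDa c_lt; rewrite /divexp derD.2 [D (invfact _ _ _)]derivation_nat // mulr0 addr0.
case: c c_lt => [|c] c_lt /=; first by rewrite derivation1 // mul0r.
have := invfact_mul charA (c := c) (e := 1); rewrite addn1 bin1 -[invfact A p 1]/(invfact A p 0).
rewrite invfact0 // mulr1 => /(_ c_lt) ->.
have Dn_comm : GRing.comm (D a) (c.+1%:R * invfact A p c.+1) by apply: commrM; apply: commr_nat.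
rewrite derivationX // -(commr_nat (a ^+ c * D a)) -mulrA.
by rewrite -mulrA Dn_comm mulrA.
Qed.

Variable f : nat -> A.

Lemma divpow0 N : divpow p f N 0 = 1.
Proof. by rewrite /divpow big1 // => k _; rewrite digit0 divexp0. Qed.

Lemma divpowS N r c : (r < p ^ N)%N -> (c < p)%N ->
  divpow p f N.+1 (r + p ^ N * c) = divpow p f N r * divexp p (f N) c.
Proof.
move=> r_lt c_lt; rewrite /divpow big_ord_recr /= digitD_top //; congr (_ * _).
by apply: eq_bigr => k _; rewrite digitD_low.
Qed.

Lemma divpow_widen N M i : (N <= M)%N -> (i < p ^ N)%N -> divpow p f M i = divpow p f N i.
Proof.
move=> /subnK <-; elim: (M - N)%N => [|m IHm] i_lt //.
have i_lt' : (i < p ^ (m + N))%N by apply: leq_trans i_lt _; rewrite leq_pexp2l // leq_addl.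
by rewrite addSn -{1}[i]addn0 -(muln0 (p ^ (m + N))%N) divpowS // divexp0 mulr1 IHm.
Qed.

Lemma commr_divpow (b : A) N i :
  (forall k, (k < N)%N -> GRing.comm b (f k)) -> GRing.comm b (divpow p f N i).
Proof. by move=> bf; apply: commr_prod => k _; apply/commr_divexp/bf. Qed.

Lemma divpow_der0 (D : A -> A) N i : is_derivation D ->
  (forall k, (k < N)%N -> D (f k) = 0) -> D (divpow p f N i) = 0.
Proof.
move=> derD Df0; apply: derivation_prod0 => // k _.
rewrite divexp_der ?Df0 ?ltn_pmod //; last exact: commr0.
by case: ifP; rewrite ?mulr0.
Qed.

Lemma divpowM N i j :
    (forall k l, (k < N)%N -> (l < N)%N -> GRing.comm (f k) (f l)) ->
    (forall k, (k < N)%N -> f k ^+ p = 0) ->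
    (i < p ^ N)%N -> (j < p ^ N)%N ->
  divpow p f N i * divpow p f N j =
    'C(i + j, j)%:R * (if (i + j < p ^ N)%N then divpow p f N (i + j) else 0).
Proof.
elim: N i j => [|N IHN] i j f_comm f_nil.
  by rewrite expn0 !ltnS !leqn0 => /eqP-> /eqP->; rewrite /divpow !big_ord0 mulr1.
move=> /(split_top_digit p_gt0)[r [c [r_lt c_lt ->]]].
move=> /(split_top_digit p_gt0)[s [e [s_lt e_lt ->]]].
have f_comm' k l : (k < N)%N -> (l < N)%N -> GRing.comm (f k) (f l) by move=> *; apply: f_comm; lia.
have f_nil' k : (k < N)%N -> f k ^+ p = 0 by move=> *; apply: f_nil; lia.
have fN_comm : GRing.comm (divexp p (f N) c) (divpow p f N s).
  by apply: commr_divpow => k k_lt; apply/commr_sym/commr_divexp; apply: f_comm; lia.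
rewrite !divpowS // -mulrA (mulrA (divexp _ _ c)) fN_comm -(mulrA (divpow p f N s)).
rewrite (mulrA (divpow p f N r)) IHN // divexpM ?f_nil // expnS.
set q := (p ^ N)%N in r_lt s_lt *.
have -> : (r + q * c + (s + q * e) = (r + s) + q * (c + e))%N by nia.
have [rs_lt|rs_ge] := ltnP (r + s) q; last first.
  have -> : (r + s + q * (c + e) = (r + s - q) + q * (c + e).+1)%N by nia.
  rewrite lucas_binomial_pchar ?(@bin_small (r + s - q) s) ?mul0n ?mulr0 ?mul0r //; lia.
rewrite lucas_binomial_pchar // natrM; have [ce_lt|ce_ge] := ltnP (c + e) p; last first.
  by rewrite ifF ?mulr0 //; apply/negbTE; rewrite -leqNgt; nia.
rewrite ifT; last by nia.
rewrite divpowS // -mulrA (mulrA (divpow p f N (r + s))) (commr_nat (divpow p f N (r + s))).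
by rewrite -mulrA mulrA.
Qed.

Lemma divpow_der (D : A -> A) N i : is_derivation D ->
    (forall k l, (k < N)%N -> (l < N)%N -> GRing.comm (f k) (f l)) ->
    (forall k, (k < N)%N -> f k ^+ p = 0) ->
    (forall k, (k < N)%N -> D (f k) = divpow p f k (p ^ k - 1)) ->
    (i < p ^ N)%N ->
  D (divpow p f N i) = if (0 < i)%N then divpow p f N i.-1 else 0.
Proof.
move=> derD; elim: N i => [|N IHN] i f_comm f_nil Df.
  by rewrite expn0 ltnS leqn0 => /eqP->; rewrite divpow0 derivation1.
move=> /(split_top_digit p_gt0)[r [c [r_lt c_lt ->]]].
have DfN : D (f N) = divpow p f N (p ^ N - 1) by apply: Df.
have f_comm' k l : (k < N)%N -> (l < N)%N -> GRing.comm (f k) (f l) by move=> *; apply: f_comm; lia.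
have f_nil' k : (k < N)%N -> f k ^+ p = 0 by move=> *; apply: f_nil; lia.
have Df' k : (k < N)%N -> D (f k) = divpow p f k (p ^ k - 1) by move=> *; apply: Df; lia.
have fN_comm k : (k < N)%N -> GRing.comm (f N) (f k) by move=> *; apply: f_comm; lia.
have top_lt : (p ^ N - 1 < p ^ N)%N by rewrite subn1 prednK ?expn_gt0 ?p_gt0.
have DfN_comm c' : GRing.comm (divexp p (f N) c') (D (f N)).
  by rewrite DfN; apply: commr_divpow => k k_lt; apply/commr_sym/commr_divexp/commr_sym/fN_comm.
rewrite divpowS // derD.2 IHN // (divexp_der (D := D)) //; last by rewrite DfN; apply: commr_divpow.
set q := (p ^ N)%N in r_lt top_lt DfN *.
case: r r_lt => [|r] r_lt /=.
  rewrite divpow0 mul0r add0r mul1r; case: c c_lt => [|c] c_lt /=; first by rewrite muln0.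
  have -> : (0 + q * c.+1 = (q - 1 + q * c).+1)%N by nia.
  by rewrite DfN_comm DfN /= divpowS //; apply: ltnW.
(* For r > 0 the product x^[r] x^[p^N - 1] carries into digit N, hence vanishes. *)
have -> : divpow p f N r.+1 * (if (0 < c)%N then divexp p (f N) c.-1 * D (f N) else 0) = 0.
  case: c c_lt => [|c] c_lt /=; first by rewrite mulr0.
  by rewrite DfN_comm DfN mulrA divpowM // ifF ?mulr0 ?mul0r //; lia.
have r_lt' : (r < q)%N by lia.
by rewrite addr0 -divpowS.
Qed.

End DividedPowers.

Lemma xdiv_divpow (A : nzRingType) p n (x : 'I_n -> nat -> A) nu N i :
  p \in [pchar A] -> (i < p ^ N)%N -> xdiv p x nu i = divpow p (x nu) N i.
Proof.
move=> charA i_lt; have p_gt1 := prime_gt1 (pcharf_prime charA).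
have i_lt' : (i < p ^ i.+1)%N by apply: ltn_trans (ltn_expl _ p_gt1).
rewrite [LHS](_ : _ = divpow p (x nu) i.+1 i) //.
by rewrite -(divpow_widen charA _ (leq_maxr N i.+1)) // (divpow_widen charA _ (leq_maxl N i.+1)).
Qed.

Lemma xdiv0 (A : nzRingType) p n (x : 'I_n -> nat -> A) nu :
  p \in [pchar A] -> xdiv p x nu 0 = 1.
Proof. by move=> charA; rewrite (xdiv_divpow _ _ charA (N := 0)) ?divpow0. Qed.

Lemma xdiv_expn (A : nzRingType) p n (x : 'I_n -> nat -> A) nu k :
  p \in [pchar A] -> xdiv p x nu (p ^ k) = x nu k.
Proof.
move=> charA; have p_gt1 := prime_gt1 (pcharf_prime charA).
rewrite (xdiv_divpow _ _ charA (N := k.+1)) ?ltn_exp2l // -[(p ^ k)%N]add0n -[(p ^ k)%N]muln1.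
by rewrite divpowS ?expn_gt0 ?(ltnW p_gt1) // divpow0 // mul1r divexp1.
Qed.

Section ProductDescent.

Variables (A : nzRingType) (n : nat) (delta : 'I_n -> A -> A).
Hypothesis der : forall nu, is_derivation (delta nu).
Variables (P : 'I_n -> pred nat) (Y : 'I_n -> nat -> A).
Hypothesis P_le : forall nu i j, (i <= j)%N -> P nu j -> P nu i.
Hypothesis Y0 : forall nu, Y nu 0 = 1.
Hypothesis YM : forall nu i j, P nu i -> P nu j ->
  Y nu i * Y nu j = 'C(i + j, j)%:R * (if P nu (i + j) then Y nu (i + j) else 0).
Hypothesis Y_comm : forall nu mu i j, P nu i -> P mu j -> GRing.comm (Y nu i) (Y mu j).
Hypothesis Y_der : forall nu mu i, P mu i ->
  delta nu (Y mu i) = if (nu == mu) && (0 < i)%N then Y mu i.-1 else 0.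

Let inP (a : 'I_n -> nat) := [forall nu, P nu (a nu)].
Let Yprod (a : 'I_n -> nat) := \prod_(nu < n) Y nu (a nu).

Lemma inP_le a b : (forall nu, a nu <= b nu)%N -> inP b -> inP a.
Proof. by move=> ab /forallP Pb; apply/forallP => nu; apply: P_le (Pb nu). Qed.

Lemma Yprod_ext a b : a =1 b -> Yprod a = Yprod b.
Proof. by move=> ab; apply: eq_bigr => nu _; rewrite ab. Qed.

Lemma Yprod_mul a b : inP a -> inP b ->
  Yprod a * Yprod b = (\prod_nu 'C(a nu + b nu, b nu))%:R *
    (if inP (fun nu => a nu + b nu)%N then Yprod (fun nu => a nu + b nu)%N else 0).
Proof.
move=> /forallP Pa /forallP Pb; rewrite /Yprod -prodrM_comm => [|nu mu _ _]; last exact: Y_comm.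
under eq_bigr => nu _ do rewrite YM //.
rewrite prodrM_comm => [|nu mu _ _]; last exact/commr_sym/commr_nat.
by rewrite natr_prod prodr_if0.
Qed.

Lemma Yprod_der nu b : inP b ->
  delta nu (Yprod b) =
    if (0 < b nu)%N then Yprod (fun i => if i == nu then (b i).-1 else b i) else 0.
Proof.
move=> /forallP Pb.
have Y_der_other mu : mu != nu -> delta nu (Y mu (b mu)) = 0.
  by move=> /negbTE mu_nu; rewrite Y_der // eq_sym mu_nu.
rewrite /Yprod (derivation_prod1 (der nu) (index_enum_uniq _) (mem_index_enum nu) Y_der_other).
case: ifP => b_gt0.
  by apply: eq_bigr => i _; case: eqP => [->|//]; rewrite Y_der // eqxx b_gt0.
by apply: (prodr_eq0_mem (i := nu)); rewrite ?mem_index_enum // eqxx Y_der // eqxx b_gt0.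
Qed.

Lemma Yprod_iter nu m b : inP b ->
  iter m (delta nu) (Yprod b) =
    if (m <= b nu)%N then Yprod (fun i => if i == nu then b i - m else b i)%N else 0.
Proof.
move=> Pb; elim: m => [|m IHm] /=.
  by apply: Yprod_ext => i; case: eqP => // ->; rewrite subn0.
rewrite IHm; have [m_le|m_gt] := leqP m (b nu); last first.
  by rewrite derivation0 // leqNgt ltnW.
rewrite Yprod_der; last by apply: inP_le Pb => i; case: eqP => // _; apply: leq_subr.
rewrite eqxx subn_gt0; case: ifP => // _.
by apply: Yprod_ext => i; case: eqP => // _; rewrite subnS.
Qed.

Lemma Yprod_foldr a (s : seq 'I_n) b : uniq s -> inP b ->
  foldr (fun i f => iter (a i) (delta i) \o f) id s (Yprod b) =
    if all (fun i => a i <= b i)%N s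
    then Yprod (fun i => if i \in s then b i - a i else b i)%N else 0.
Proof.
elim: s b => [|i s IHs] b /=; first by move=> _ _; apply: Yprod_ext.
move=> /andP[i_s s_uniq] Pb; rewrite IHs //; case: ifP => s_le; last first.
  by rewrite derivation_iter0 // andbF.
rewrite Yprod_iter; last by apply: inP_le Pb => j; case: ifP => // _; apply: leq_subr.
rewrite (negbTE i_s) andbT; case: ifP => // _.
by apply: Yprod_ext => j; rewrite in_cons; case: eqP => [->|] //=; rewrite (negbTE i_s).
Qed.

Theorem product_descent : iterative_descent delta inP Yprod.
Proof.
split; first by apply: big1 => nu _; apply: Y0.
split; first exact: Yprod_mul.
move=> a b Pb; rewrite /dpow Yprod_foldr ?enum_uniq //.
have -> : all (fun i => a i <= b i)%N (enum 'I_n) = [forall i, a i <= b i]%N.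
  by apply/allP/forallP => le_ab i; rewrite ?le_ab ?mem_enum.
by case: ifP => // _; apply: Yprod_ext => i; rewrite mem_enum.
Qed.

End ProductDescent.

(* Enough base-p digits for every index below p ^ d, or, when d = oo, for the indices up to j. *)
Definition ndigits (d : option nat) (j : nat) : nat := if d is Some m then m else j.+1.

Lemma ltd_ndigits d j k : (k < ndigits d j)%N -> ltd k d.
Proof. by case: d. Qed.

Lemma ltpow_ndigits p d i j : (1 < p)%N -> ltpow p d i -> (i <= j)%N -> (i < p ^ ndigits d j)%N.
Proof.
move=> p_gt1; case: d => [m|_] //= ij.
exact: leq_ltn_trans ij (ltn_trans (ltnSn j) (ltn_expl _ p_gt1)).
Qed.

Lemma ltpow_ndigitsE p d j : (1 < p)%N -> ltpow p d j = (j < p ^ ndigits d j)%N.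
Proof. by move=> p_gt1; case: d => //=; rewrite (ltn_trans (ltnSn j) (ltn_expl _ p_gt1)). Qed.

Lemma ltpow_le p d i j : (i <= j)%N -> ltpow p d j -> ltpow p d i.
Proof. by move=> ij; case: d => //= m; apply: leq_ltn_trans. Qed.

Section DividedPowerDescent.

Variables (A : nzRingType) (p n : nat) (delta : 'I_n -> A -> A).
Variables (d : 'I_n -> option nat) (x : 'I_n -> nat -> A).
Hypothesis charA : p \in [pchar A].
Hypothesis der : forall nu, is_derivation (delta nu).
Hypothesis x_comm : forall nu mu k l, ltd k (d nu) -> ltd l (d mu) ->
  x nu k * x mu l = x mu l * x nu k.
Hypothesis x_der : forall nu mu k, ltd k (d mu) ->
  delta nu (x mu k) = if nu == mu then xdiv p x mu (p ^ k - 1) else 0.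
Hypothesis x_nil : forall mu k, ltd k (d mu) -> x mu k ^+ p = 0.

Let p_gt1 : (1 < p)%N := prime_gt1 (pcharf_prime charA).

Lemma xdivM mu i j : ltpow p (d mu) i -> ltpow p (d mu) j ->
  xdiv p x mu i * xdiv p x mu j =
    'C(i + j, j)%:R * (if ltpow p (d mu) (i + j) then xdiv p x mu (i + j) else 0).
Proof.
move=> i_lt j_lt; set N := ndigits (d mu) (i + j).
have ltdN k : (k < N)%N -> ltd k (d mu) := @ltd_ndigits _ _ k.
have i_lt' : (i < p ^ N)%N by rewrite ltpow_ndigits ?leq_addr.
have j_lt' : (j < p ^ N)%N by rewrite ltpow_ndigits ?leq_addl.
have x_comm' k l : (k < N)%N -> (l < N)%N -> GRing.comm (x mu k) (x mu l).
  by move=> /ltdN k_lt /ltdN l_lt; apply: x_comm.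
have x_nil' k : (k < N)%N -> x mu k ^+ p = 0 by move=> /ltdN; apply: x_nil.
rewrite (xdiv_divpow _ _ charA i_lt') (xdiv_divpow _ _ charA j_lt') divpowM //.
by rewrite (ltpow_ndigitsE _ _ p_gt1); case: ifP => // ij_lt; rewrite (xdiv_divpow _ _ charA ij_lt).
Qed.

Lemma xdiv_comm nu mu i j : ltpow p (d nu) i -> ltpow p (d mu) j ->
  GRing.comm (xdiv p x nu i) (xdiv p x mu j).
Proof.
move=> i_lt j_lt; rewrite (xdiv_divpow _ _ charA (ltpow_ndigits p_gt1 i_lt (leqnn i))).
rewrite (xdiv_divpow _ _ charA (ltpow_ndigits p_gt1 j_lt (leqnn j))).
apply: commr_divpow => l l_lt; apply/commr_sym/commr_divpow => k k_lt.
exact: x_comm (ltd_ndigits l_lt) (ltd_ndigits k_lt).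
Qed.

Lemma xdiv_der nu mu i : ltpow p (d mu) i ->
  delta nu (xdiv p x mu i) = if (nu == mu) && (0 < i)%N then xdiv p x mu i.-1 else 0.
Proof.
move=> i_lt; set N := ndigits (d mu) i.
have ltdN k : (k < N)%N -> ltd k (d mu) := @ltd_ndigits _ _ k.
have i_lt' : (i < p ^ N)%N by rewrite ltpow_ndigits.
rewrite (xdiv_divpow _ _ charA i_lt'); have [->|nu_mu] /= := eqVneq nu mu; last first.
  by apply: divpow_der0 => // k /ltdN k_lt; rewrite x_der // (negbTE nu_mu).
have x_comm' k l : (k < N)%N -> (l < N)%N -> GRing.comm (x mu k) (x mu l).
  by move=> /ltdN k_lt /ltdN l_lt; apply: x_comm.
have x_nil' k : (k < N)%N -> x mu k ^+ p = 0 by move=> /ltdN; apply: x_nil.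
have x_der' k : (k < N)%N -> delta mu (x mu k) = divpow p (x mu) k (p ^ k - 1).
  move=> /ltdN k_lt; rewrite x_der // eqxx (xdiv_divpow _ _ charA (N := k)) //.
  by rewrite ltn_subrL expn_gt0 (ltnW p_gt1).
rewrite (divpow_der charA) //; case: ifP => // i_gt0.
by rewrite (xdiv_divpow _ _ charA (leq_ltn_trans (leq_pred i) i_lt')).
Qed.

Lemma xmulti_descent : iterative_descent delta (inI p d) (xmulti p x).
Proof.
apply: (product_descent der (P := fun nu => ltpow p (d nu)) (Y := xdiv p x)).
- by move=> nu i j; apply: ltpow_le.
- by move=> nu; apply: xdiv0.
- exact: xdivM.
- exact: xdiv_comm.
- exact: xdiv_der.
Qed.

End DividedPowerDescent.

Definition single n (mu : 'I_n) (j : nat) : 'I_n -> nat := fun nu => if nu == mu then j else 0%N.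

Lemma ltpow_expn p d k : (1 < p)%N -> ltd k d -> ltpow p d (p ^ k).
Proof. by move=> p_gt1; case: d => //= m; rewrite ltn_exp2l. Qed.

Lemma inI_single n p (d : 'I_n -> option nat) mu j : (0 < p)%N ->
  inI p d (single mu j) = ltpow p (d mu) j.
Proof.
move=> p_gt0; apply/forallP/idP => [/(_ mu)|j_lt nu]; rewrite /single ?eqxx //.
by case: eqP => [->|_] //; case: (d nu) => //= m; rewrite expn_gt0 p_gt0.
Qed.

Lemma xmulti_single (A : nzRingType) p n (x : 'I_n -> nat -> A) mu j :
  p \in [pchar A] -> xmulti p x (single mu j) = xdiv p x mu j.
Proof.
move=> charA; rewrite /xmulti (eq_bigr (fun nu => if nu == mu then xdiv p x mu j else 1)).
  by rewrite -big_mkcond big_pred1_eq.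
by move=> nu _; rewrite /single; case: eqP => [->|]; rewrite ?xdiv0.
Qed.

Lemma dpow_single1 (A : nzRingType) n (delta : 'I_n -> A -> A) nu z :
  dpow delta (single nu 1) z = delta nu z.
Proof.
have foldr_single s : uniq s ->
    foldr (fun i f => iter (single nu 1 i) (delta i) \o f) id s z =
      if nu \in s then delta nu z else z.
  elim: s => [|mu s IHs] //= /andP[mu_s s_uniq]; rewrite IHs // in_cons /single.
  by case: (eqVneq mu nu) => [<-|] //=; rewrite (negbTE mu_s).
by rewrite /dpow foldr_single ?enum_uniq ?mem_enum.
Qed.

Section DescentGenerators.

Variables (A : nzRingType) (p n : nat) (delta : 'I_n -> A -> A).
Variables (d : 'I_n -> option nat) (x : 'I_n -> nat -> A).
Hypothesis charA : p \in [pchar A].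
Hypothesis desc : iterative_descent delta (inI p d) (xmulti p x).

Let p_gt1 : (1 < p)%N := prime_gt1 (pcharf_prime charA).
Let p_gt0 : (0 < p)%N := ltnW p_gt1.

Lemma descent_xdivM mu i j : ltpow p (d mu) i -> ltpow p (d mu) j ->
  xdiv p x mu i * xdiv p x mu j =
    'C(i + j, j)%:R * (if ltpow p (d mu) (i + j) then xdiv p x mu (i + j) else 0).
Proof.
move=> i_lt j_lt; have := desc.2.1 (single mu i) (single mu j).
rewrite !inI_single // !xmulti_single // => /(_ i_lt j_lt) ->.
have single_add nu : (single mu i nu + single mu j nu)%N = single mu (i + j) nu.
  by rewrite /single; case: ifP.
rewrite (eq_bigr (fun nu => if nu == mu then 'C(i + j, j) else 1%N)); last first.
  by move=> nu _; rewrite /single; case: ifP; rewrite ?bin0.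
rewrite -big_mkcond big_pred1_eq; congr (_ * _).
have -> : inI p d (fun nu => single mu i nu + single mu j nu)%N = ltpow p (d mu) (i + j).
  by rewrite -inI_single //; apply: eq_forallb => nu; rewrite single_add.
by case: ifP => // _; rewrite -xmulti_single //; apply: eq_bigr => nu _; rewrite single_add.
Qed.

Lemma descent_gen_der nu mu k : ltd k (d mu) ->
  delta nu (x mu k) = if nu == mu then xdiv p x mu (p ^ k - 1) else 0.
Proof.
move=> k_lt; have pk_lt := ltpow_expn p_gt1 k_lt.
rewrite -(xdiv_expn x mu k charA) -(xmulti_single x mu _ charA) -dpow_single1.
rewrite desc.2.2 ?inI_single //.
have [->|nu_mu] := eqVneq nu mu; last first.
  by rewrite ifF //; apply/negbTE/forallPn; exists nu; rewrite /single eqxx (negbTE nu_mu).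
rewrite ifT; last by apply/forallP => i; rewrite /single; case: eqP; rewrite ?expn_gt0 ?p_gt0.
rewrite -xmulti_single //; apply: eq_bigr => i _.
by rewrite /single; case: eqP; rewrite ?subn1.
Qed.

Lemma descent_gen_nil mu k : ltd k (d mu) -> x mu k ^+ p = 0.
Proof.
move=> k_lt; have pk_lt := ltpow_expn p_gt1 k_lt.
(* By Lucas, C((j+1) p^k, p^k) = j + 1 mod p, which drives the induction on j. *)
suff pow_x j : x mu k ^+ j =
    j`!%:R * (if ltpow p (d mu) (j * p ^ k) then xdiv p x mu (j * p ^ k) else 0).
  have p_fact0 : p`!%:R = 0 :> A by apply/eqP; rewrite -(dvdn_pcharf charA) dvdn_fact ?p_gt0 ?leqnn.
  by rewrite pow_x p_fact0 mul0r.
elim: j => [|j IHj]; first by rewrite mul0n ifT ?xdiv0 ?mulr1 //; apply: ltpow_le pk_lt.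
rewrite exprSr IHj -(xdiv_expn x mu k charA) -mulrA; case: ifP => [jk_lt|jk_ge]; last first.
  rewrite mul0r mulr0 ifF ?mulr0 //; apply: contraFF jk_ge; apply: ltpow_le.
  by rewrite leq_mul2r leqnSn orbT.
rewrite descent_xdivM // -mulSnr.
have := @lucas_binomial_pchar _ _ charA k 0 0 j.+1 1.
rewrite !add0n muln1 bin0 bin1 mul1n mulnC expn_gt0 p_gt0 => /(_ isT isT) ->.
by rewrite mulrA -natrM mulnC -factS.
Qed.

End DescentGenerators.

Theorem corollary2p8 (A : nzRingType) (p : nat) (n : nat)
    (charA : p \in [pchar A])
    (delta : 'I_n -> A -> A)
    (der : forall nu, is_derivation (delta nu))
    (comm_der : forall nu mu a, delta nu (delta mu a) = delta mu (delta nu a))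
    (d : 'I_n -> option nat)
    (x : 'I_n -> nat -> A)
    (comm_x : forall nu mu k l, ltd k (d nu) -> ltd l (d mu) ->
                 x nu k * x mu l = x mu l * x nu k) :
  iterative_descent delta (inI p d) (xmulti p x) <->
  (forall nu mu k, ltd k (d mu) ->
     delta nu (x mu k) = (if nu == mu then xdiv p x mu (p ^ k - 1)%N else 0)
     /\ (x mu k) ^+ p = 0).
Proof.
split=> [desc nu mu k k_lt | gens].
  exact: conj (descent_gen_der charA desc nu k_lt) (descent_gen_nil charA desc k_lt).
apply: xmulti_descent => // [nu mu k k_lt | mu k k_lt].
- exact: (gens nu mu k k_lt).1.
- exact: (gens mu mu k k_lt).2.
Qed.
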